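(* Let $T\ge 2$, $U$ a finite set of men and $W_1\subseteq\cdots\subseteq W_T$ finite sets of women, each man having a strict total order over $W_T$ and each woman a strict total order over $U$. Then there is an optimal solution $(M_1,\dots,M_T)$ of $T$-A-SMP on this instance in which $M_1$ is the men-optimal stable matching of $(U,W_1)$.
   Context: $T$-A-SMP: compute matchings $M_1,\dots,M_T$ with $M_t$ stable for $(U,W_t)$ (preferences restricted) minimizing $\sum_{t=1}^{T-1}|M_t\setminus M_{t+1}|$. A matching is a set of man–woman pairs with each person in at most one pair; a blocking pair of $M$ is a pair $(u,w)\notin M$ with ($u$ unmatched or preferring $w$ to his partner) and ($w$ unmatched or preferring $u$ to her partner); stable means no blocking pair. The men-optimal stable matching gives every man his most preferred partner among those he has in some stable matching. *)

From mathcomp Require Import all_boot.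
Set Implicit Arguments. Unset Strict Implicit. Unset Printing Implicit Defensive.

Definition strict_total_order (X : eqType) (r : rel X) : Prop :=
  [/\ irreflexive r, transitive r & forall x y, x != y -> r x y || r y x].

Section SM.
Variables (U W : finType) (prefM : U -> rel W) (prefW : W -> rel U).
(* prefM u w w' : man u strictly prefers w to w';
   prefW w u u' : woman w strictly prefers u to u' *)

Definition is_matching (A : {set W}) (M : {set U * W}) : Prop :=
  [/\ forall p, p \in M -> p.2 \in A,
      forall p q, p \in M -> q \in M -> p.1 = q.1 -> p = q
    & forall p q, p \in M -> q \in M -> p.2 = q.2 -> p = q].

Definition blocking (A : {set W}) (M : {set U * W}) (u : U) (w : W) : Prop :=
  [/\ w \in A, (u, w) \notin M,
      (forall w', (u, w') \in M -> prefM u w w')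
    &
      (forall u', (u', w) \in M -> prefW w u u')].

Definition stable (A : {set W}) (M : {set U * W}) : Prop :=
  is_matching A M /\ forall u w, ~ blocking A M u w.

Definition men_optimal (A : {set W}) (M : {set U * W}) : Prop :=
  stable A M /\
  forall M', stable A M' -> forall u w', (u, w') \in M' ->
    exists2 w, (u, w) \in M & (w = w' \/ prefM u w w').

Definition feasible (T : nat) (Ws : nat -> {set W}) (Ms : nat -> {set U * W}) : Prop :=
  forall t, 1 <= t <= T -> stable (Ws t) (Ms t).

Definition cost (T : nat) (Ms : nat -> {set U * W}) : nat :=
  \sum_(1 <= t < T) #|Ms t :\: Ms t.+1|.

Definition optimal (T : nat) (Ws : nat -> {set W}) (Ms : nat -> {set U * W}) : Prop :=
  feasible T Ws Ms /\
  forall Ms', feasible T Ws Ms' -> cost T Ms <= cost T Ms'.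
End SM.

(* Fix an optimal solution (M_1, ..., M_T) and replace it by the chain M'_1 = the
   men-optimal stable matching of (U, W_1), M'_(t+1) = M'_t v M_(t+1), where in the join v
   every man keeps the better of his two partners.  Since W_t is contained in W_(t+1), the
   join of a matching stable for W_t with one stable for W_(t+1) is still stable for
   W_(t+1); the classical lattice argument goes through once one counts the men who
   strictly prefer their first partner.  Inductively every man weakly prefers M'_t to M_t,
   and counting shows that both match the same men.  So a pair of M'_t that disappears
   in M'_(t+1) belongs to a man who also loses his M_t pair when M_t becomes M_(t+1), and
   the chain costs no more than the optimal solution.
   Stable matchings exist by deferred acceptance, and a stable matching that no join with
   a stable matching improves is men-optimal. *)

From mathcomp Require Import all_boot.
From Stdlib Require Import Classical ClassicalEpsilon.
Set Implicit Arguments. Unset Strict Implicit. Unset Printing Implicit Defensive.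

Lemma ex_argmin_nat (X : Type) (P : X -> Prop) (f : X -> nat) x0 :
  P x0 -> exists2 x, P x & forall y, P y -> f x <= f y.
Proof.
move: {2}(f x0) (erefl (f x0)) => n; elim/ltn_ind: n x0 => n IH x fxn Px.
case: (classic (exists2 y, P y & f y < f x)) => [[y Py ltyx]|nomin].
  by apply: (IH (f y)) Py => //; rewrite -fxn.
by exists x => // y Py; rewrite leqNgt; apply/negP=> ltyx; apply: nomin; exists y.
Qed.

Section StrictTotalOrder.
Variables (X : eqType) (r : rel X).
Hypothesis ltr : strict_total_order r.

Lemma ltxx x : r x x = false.
Proof. by case: ltr. Qed.

Lemma lt_trans : transitive r.
Proof. by case: ltr. Qed.

Lemma nlt_lt x y : x != y -> ~~ r x y -> r y x.
Proof. by case: ltr => _ _ /[apply]; case: (r x y). Qed.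

Lemma lt_asym x y : r x y -> ~~ r y x.
Proof. by move=> rxy; apply/negP=> /(lt_trans rxy); rewrite ltxx. Qed.

Lemma lt_cotrans x z y : r x z -> r x y || r y z.
Proof.
move=> rxz; have [<-|nexy] := eqVneq x y; first by rewrite rxz orbT.
by case rxy: (r x y) => //=; apply: lt_trans rxz; apply: nlt_lt nexy _; rewrite rxy.
Qed.

Lemma lt_nlt_trans x y z : r x y -> ~~ r z y -> r x z.
Proof. by move=> /(lt_cotrans z) /orP[] // ->. Qed.

Lemma nlt_lt_trans x y z : ~~ r y x -> r y z -> r x z.
Proof. by move=> nyx /(lt_cotrans x) /orP[] // ryx; rewrite ryx in nyx. Qed.

Lemma nlt_trans x y z : ~~ r x y -> ~~ r y z -> ~~ r x z.
Proof. by move=> nxy nyz; apply/negP=> /(lt_cotrans y) /orP[]; apply/negP. Qed.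

Lemma nlt_anti x y : ~~ r x y -> ~~ r y x -> x = y.
Proof. by move=> nxy nyx; apply/eqP; apply: contraNT nyx => /nlt_lt; apply. Qed.

End StrictTotalOrder.

Lemma ex_best (X : finType) (r : rel X) (P : pred X) x0 :
  strict_total_order r -> P x0 -> exists2 m, P m & forall y, P y -> ~~ r y m.
Proof.
move=> ltr Px0.
have [m Pm minm] := ex_argmin_nat (P := P) (fun x => #|[set y | r y x]|) Px0.
exists m => // y Py; apply/negP=> rym.
have: [set z | r z y] \proper [set z | r z m].
  apply/properP; split; last by exists y; rewrite !inE ?rym ?ltxx.
  by apply/subsetP=> z; rewrite !inE => /lt_trans; apply.
by rewrite properEcard => /andP[_]; rewrite ltnNge minm.
Qed.

Section Matchings.
Variables (U W : finType).
Implicit Types (A B : {set W}) (M N P : {set U * W}).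

Lemma matching_uniqW A M u w w' : is_matching A M -> (u, w) \in M -> (u, w') \in M -> w = w'.
Proof. by case=> _ fst_inj _ /fst_inj /[apply] /(_ erefl) []. Qed.

Lemma matching_uniqU A M u u' w : is_matching A M -> (u, w) \in M -> (u', w) \in M -> u = u'.
Proof. by case=> _ _ snd_inj /snd_inj /[apply] /(_ erefl) []. Qed.

Lemma matching_mem A M u w : is_matching A M -> (u, w) \in M -> w \in A.
Proof. by case=> inA _ _ /inA. Qed.

Lemma matching_sub A M P : is_matching A M -> P \subset M -> is_matching A P.
Proof.
case=> inA fst_inj snd_inj /subsetP sPM.
by split=> [p /sPM|p q /sPM + /sPM|p q /sPM + /sPM]; auto.
Qed.

Lemma card_matching_fst A M : is_matching A M -> #|[set p.1 | p in M]| = #|M|.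
Proof. by case=> _ fst_inj _; apply: card_in_imset => p q /fst_inj; apply. Qed.

Lemma card_matching_snd A M : is_matching A M -> #|[set p.2 | p in M]| = #|M|.
Proof. by case=> _ _ snd_inj; apply: card_in_imset => p q /snd_inj; apply. Qed.

(* Counting: the [N]-partners of the women of [P] are men of [P] and there are as many
   of them as men of [P], so they are all the men of [P]. *)
Lemma matching_pigeonhole A B N P : is_matching A P -> is_matching B N ->
  (forall u w, (u, w) \in P -> exists2 z, z \in [set p.1 | p in P] & (z, w) \in N) ->
  forall v w, (v, w) \in N -> v \in [set p.1 | p in P] -> w \in [set p.2 | p in P].
Proof.
move=> mP mN back v w vwN vP.
pose Q := [set p in N | p.2 \in [set p.2 | p in P]].
have mQ : is_matching B Q.
  by apply: matching_sub mN _; apply/subsetP=> p; rewrite inE => /andP[].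
have QP : [set p.1 | p in Q] \subset [set p.1 | p in P].
  apply/subsetP=> _ /imsetP[[z x] /[!inE] /andP[zxN /imsetP[[u x'] uxP /= xx']] ->] /=.
  rewrite xx' in zxN; have [z' z'P z'xN] := back _ _ uxP.
  by rewrite (matching_uniqU mN zxN z'xN).
have PQ : [set p.2 | p in P] \subset [set p.2 | p in Q].
  apply/subsetP=> _ /imsetP[[u x] uxP ->] /=; have [z _ zxN] := back _ _ uxP.
  by apply/imsetP; exists (z, x) => //; rewrite inE zxN; apply/imsetP; exists (u, x).
have eqPQ : [set p.1 | p in Q] = [set p.1 | p in P].
  apply/eqP; rewrite eqEcard QP (card_matching_fst mP) (card_matching_fst mQ).
  by rewrite -(card_matching_snd mP) -(card_matching_snd mQ) subset_leq_card.
move: vP; rewrite -eqPQ => /imsetP[[v' x] /[!inE] /andP[vxN xP] /= vv'].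
by rewrite vv' in vwN; rewrite (matching_uniqW mN vwN vxN).
Qed.

End Matchings.

Section StableMatchings.
Variables (U W : finType) (prefM : U -> rel W) (prefW : W -> rel U).
Hypothesis ltM : forall u, strict_total_order (prefM u).
Hypothesis ltW : forall w, strict_total_order (prefW w).
Implicit Types (A B : {set W}) (M N P : {set U * W}).

Local Notation stable := (stable prefM prefW).

Lemma stable_rival B N u w : stable B N -> w \in B -> (u, w) \notin N ->
  (forall x, (u, x) \in N -> prefM u w x) -> exists2 v, (v, w) \in N & prefW w v u.
Proof.
move=> [_ noblock] wB uwN uprefw.
apply: NNPP => norival; apply: (noblock u w); split=> // v vwN.
have nevu : v != u by apply: contraNneq uwN => <-.
by apply: (nlt_lt (ltW w) nevu); apply/negP=> pvu; apply: norival; exists v.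
Qed.

Lemma nlt_notin_lt N u w : (u, w) \notin N ->
  (forall x, (u, x) \in N -> ~~ prefM u x w) -> forall x, (u, x) \in N -> prefM u w x.
Proof.
move=> uwN nlt x uxN; have nexw : x != w by apply: contraNneq uwN => <-.
exact: (nlt_lt (ltM u) nexw (nlt _ uxN)).
Qed.

(* Every man keeps the better of his two partners: the men-join of Conway's lattice. *)
Definition join M N : {set U * W} :=
  [set p | (p \in M) && [forall x, ((p.1, x) \in N) ==> ~~ prefM p.1 x p.2]
        || (p \in N) && [forall x, ((p.1, x) \in M) ==> ~~ prefM p.1 x p.2]].

Lemma joinC M N : join M N = join N M.
Proof. by apply/setP=> p; rewrite !inE orbC. Qed.

Lemma joinP M N u w : reflect
  ((u, w) \in M /\ (forall x, (u, x) \in N -> ~~ prefM u x w) \/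
   (u, w) \in N /\ (forall x, (u, x) \in M -> ~~ prefM u x w))
  ((u, w) \in join M N).
Proof.
rewrite inE /=; apply: (iffP orP).
  by case=> /andP[uw /forallP better]; [left|right]; split=> // x; apply/implyP/better.
by case=> -[uw better]; [left|right]; rewrite uw; apply/forallP=> x; apply/implyP/better.
Qed.

Definition men_prefer M N :=
  forall u x, (u, x) \in N -> exists2 y, (u, y) \in M & ~~ prefM u x y.

Lemma join_prefer_r A B M N : is_matching A M -> is_matching B N -> men_prefer (join M N) N.
Proof.
move=> mM mN u x uxN.
case: (boolP [exists y, ((u, y) \in M) && prefM u y x]) => [/existsP[y /andP[uyM pyx]]|].
  exists y; last exact: lt_asym (ltM u) _ _ pyx.
  apply/joinP; left; split=> // x' /(matching_uniqW mN uxN) <-.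
  exact: lt_asym (ltM u) _ _ pyx.
rewrite negb_exists => /forallP noy; exists x; last by rewrite ltxx.
by apply/joinP; right; split=> // y uyM; move: (noy y); rewrite uyM.
Qed.

Lemma join_prefer_l A B M N : is_matching A M -> is_matching B N -> men_prefer (join M N) M.
Proof. by move=> mM mN; rewrite joinC; apply: join_prefer_r mN mM. Qed.

Lemma join_rivals A B M N u u' w : A \subset B -> stable A M -> stable B N ->
  (u, w) \in M -> (forall x, (u, x) \in N -> ~~ prefM u x w) ->
  (u', w) \in N -> (forall x, (u', x) \in M -> ~~ prefM u' x w) -> u = u'.
Proof.
move=> AB sM sN uwM ubest u'wN u'best; have [[mM _] [mN _]] := (sM, sN).
have [//|neuu'] := eqVneq u u'.
have uwN : (u, w) \notin N by apply: contraNN neuu' => /(matching_uniqU mN)/(_ u'wN)/eqP.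
have u'wM : (u', w) \notin M by apply: contraNN neuu' => /(matching_uniqU mM uwM)/eqP.
have wA := matching_mem mM uwM.
have [v vwN] := stable_rival sN (subsetP AB _ wA) uwN (nlt_notin_lt uwN ubest).
rewrite (matching_uniqU mN vwN u'wN) => pu'u.
have [v' v'wM] := stable_rival sM wA u'wM (nlt_notin_lt u'wM u'best).
by rewrite (matching_uniqU mM v'wM uwM) => /(lt_asym (ltW w)); rewrite pu'u.
Qed.

Lemma join_matching A B M N : A \subset B -> stable A M -> stable B N ->
  is_matching B (join M N).
Proof.
move=> AB sM sN; have [[mM _] [mN _]] := (sM, sN); split.
- move=> [u w] /joinP[] [uw _]; last exact: matching_mem mN uw.
  exact: subsetP AB _ (matching_mem mM uw).
- move=> [u w] [u1 w'] /joinP uwJ /joinP uw'J /= uu1; subst u1.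
  case: uwJ uw'J => -[uw best] [] [uw' best'];
    by [rewrite (matching_uniqW mM uw uw') | rewrite (matching_uniqW mN uw uw')
       | rewrite (nlt_anti (ltM u) (best _ uw') (best' _ uw))].
- move=> [u w] [u' w1] /joinP uwJ /joinP u'wJ /= ww1; subst w1.
  case: uwJ u'wJ => -[uw best] [] [u'w best'];
    by [rewrite (matching_uniqU mM uw u'w) | rewrite (matching_uniqU mN uw u'w)
       | rewrite (join_rivals AB sM sN uw best u'w best')
       | rewrite (join_rivals AB sM sN u'w best' uw best)].
Qed.

Definition upgraded M N : {set U * W} :=
  [set p in M | [forall y, ((p.1, y) \in N) ==> prefM p.1 p.2 y]].

Lemma upgraded_sub M N : upgraded M N \subset M.
Proof. by apply/subsetP=> p; rewrite inE => /andP[]. Qed.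

Lemma upgraded_join M N : upgraded M N \subset join M N.
Proof.
apply/subsetP=> -[u w] /[!inE] /andP[uwM /forallP better] /=.
rewrite uwM; apply/orP; left; apply/forallP=> y; apply/implyP=> /(implyP (better y)).
exact: lt_asym (ltM u) _ _.
Qed.

Lemma notin_join_upgraded A M N v w : is_matching A N -> (v, w) \in N ->
  (v, w) \notin join M N -> v \in [set p.1 | p in upgraded M N].
Proof.
move=> mN vwN vwJ.
have [x vxM pxw] : exists2 x, (v, x) \in M & prefM v x w.
  apply: NNPP => nox; move/negP: vwJ; apply; apply/joinP; right; split=> // x vxM.
  by apply/negP=> pxw; apply: nox; exists x.
apply/imsetP; exists (v, x) => //; rewrite inE vxM.
by apply/forallP=> y; apply/implyP=> /(matching_uniqW mN vwN) <-.
Qed.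

(* The woman of an upgraded pair prefers her [N]-partner, who is himself upgraded:
   otherwise he and she would block [M]. *)
Lemma upgraded_rival A B M N : A \subset B -> stable A M -> stable B N ->
  forall u w, (u, w) \in upgraded M N ->
  exists2 z, z \in [set p.1 | p in upgraded M N] & (z, w) \in N.
Proof.
move=> AB sM sN u w; have [[mM noblockM] [mN _]] := (sM, sN).
rewrite inE => /andP[uwM /forallP better]; have {}better y := implyP (better y).
have uwN : (u, w) \notin N by apply/negP=> /better; rewrite ltxx.
have wA := matching_mem mM uwM.
have [z zwN pzu] := stable_rival sN (subsetP AB _ wA) uwN better.
exists z => //; apply: NNPP => zNup; apply: (noblockM z w).
have zwM : (z, w) \notin M.
  by apply/negP=> /(matching_uniqU mM uwM) uz; move: pzu; rewrite -uz ltxx.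
split=> // [y zyM|u' u'wM]; last by rewrite -(matching_uniqU mM uwM u'wM).
have neyw : y != w by apply: contraNneq zwM => <-.
apply: (nlt_lt (ltM z) neyw); apply/negP=> pyw; apply: zNup.
apply/imsetP; exists (z, y) => //; rewrite inE zyM.
by apply/forallP=> x; apply/implyP=> /(matching_uniqW mN zwN) <-.
Qed.

Lemma join_stable A B M N : A \subset B -> stable A M -> stable B N -> stable B (join M N).
Proof.
move=> AB sM sN; split; first exact: join_matching AB sM sN.
have [[mM _] [mN _]] := (sM, sN).
move=> u w [wB uwJ ubetterJ wbetterJ].
have ubetter K : men_prefer (join M N) K -> forall x, (u, x) \in K -> prefM u w x.
  by move=> pref x /pref [y uyJ nxy]; apply: (lt_nlt_trans (ltM u) (ubetterJ _ uyJ)).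
have ubetterM := ubetter _ (join_prefer_l mM mN).
have ubetterN := ubetter _ (join_prefer_r mM mN).
have uwM : (u, w) \notin M by apply/negP=> /ubetterM; rewrite ltxx.
have uwN : (u, w) \notin N by apply/negP=> /ubetterN; rewrite ltxx.
have [v vwN pvu] := stable_rival sN wB uwN ubetterN.
have vwJ : (v, w) \notin join M N.
  by apply/negP=> /wbetterJ /(lt_asym (ltW w)); rewrite pvu.
have mUp := matching_sub mM (upgraded_sub M N).
(* [w]'s [N]-partner [v] is upgraded, hence so is her [M]-partner [u0]: she keeps [u0]
   in the join and prefers him to [u]. *)
have := matching_pigeonhole mUp mN (upgraded_rival AB sM sN) vwN (notin_join_upgraded mN vwN vwJ).
case/imsetP=> -[u0 w0] u0U /= ww0; subst w0.
have u0wM := subsetP (upgraded_sub M N) _ u0U.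
have [u' u'wM] := stable_rival sM (matching_mem mM u0wM) uwM ubetterM.
rewrite -(matching_uniqU mM u0wM u'wM).
by apply/negP/(lt_asym (ltW w))/wbetterJ/(subsetP (upgraded_join M N)).
Qed.

Lemma men_prefer_matched A M N : stable A M -> stable A N -> men_prefer M N ->
  forall u w, (u, w) \in M -> exists x, (u, x) \in N.
Proof.
move=> sM sN prefMN; have [[mM _] [mN _]] := (sM, sN).
have womenMN : [set p.2 | p in M] \subset [set p.2 | p in N].
  apply/subsetP=> _ /imsetP[[u w] uwM ->] /=.
  have [uwN|uwN] := boolP ((u, w) \in N); first by apply/imsetP; exists (u, w).
  have ubetter : forall x, (u, x) \in N -> prefM u w x.
    apply: (nlt_notin_lt uwN) => x /prefMN [y uyM].
    by rewrite (matching_uniqW mM uwM uyM).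
  have [v vwN _] := stable_rival sN (matching_mem mM uwM) uwN ubetter.
  by apply/imsetP; exists (v, w).
have menNM : [set p.1 | p in N] \subset [set p.1 | p in M].
  apply/subsetP=> _ /imsetP[[u x] /prefMN[y uyM _] ->]; by apply/imsetP; exists (u, y).
have menMN : [set p.1 | p in N] = [set p.1 | p in M].
  apply/eqP; rewrite eqEcard menNM (card_matching_fst mM) (card_matching_fst mN).
  by rewrite -(card_matching_snd mM) -(card_matching_snd mN) subset_leq_card.
move=> u w uwM; have : u \in [set p.1 | p in N] by rewrite menMN; apply/imsetP; exists (u, w).
by case/imsetP=> -[u' x] uxN /= ->; exists x.
Qed.

(* A man who loses his pair when [M] is joined with [N'] also loses his [N]-pair when
   [N] is replaced by [N']. *)
Lemma card_join_loss A B M N N' : stable A M -> stable A N -> is_matching B N' ->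
  men_prefer M N -> #|M :\: join M N'| <= #|N :\: N'|.
Proof.
move=> sM sN mN' prefMN; have [[mM _] [mN _]] := (sM, sN).
have mlost : is_matching A (M :\: join M N') := matching_sub mM (subsetDl _ _).
rewrite -(card_matching_fst mlost); apply: leq_trans (leq_imset_card fst _).
apply/subset_leq_card/subsetP=> _ /imsetP[[u w] /[!in_setD] /andP[uwJ uwM] ->] /=.
have [x uxN] := men_prefer_matched sM sN prefMN uwM.
have [y uyM] := prefMN _ _ uxN; rewrite -(matching_uniqW mM uwM uyM) => nxw.
apply/imsetP; exists (u, x) => //; rewrite in_setD uxN andbT.
move: uwJ; apply: contraNN => uxN'.
by apply/joinP; left; split=> // x' /(matching_uniqW mN' uxN') <-.
Qed.

Section DeferredAcceptance.
Variable A : {set W}.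
Implicit Type R : {set U * W}.

(* [R] is the set of pairs (u, w) such that w has rejected u. *)
Definition proposal R u : option W :=
  [pick w | (w \in A) && ((u, w) \notin R) &&
            [forall w', (w' \in A) && ((u, w') \notin R) ==> ~~ prefM u w' w]].

Variant proposal_spec R u : option W -> Prop :=
| ProposalSome w of w \in A & (u, w) \notin R &
    (forall w', w' \in A -> (u, w') \notin R -> ~~ prefM u w' w) : proposal_spec R u (Some w)
| ProposalNone of (forall w, w \in A -> (u, w) \in R) : proposal_spec R u None.

Lemma proposalP R u : proposal_spec R u (proposal R u).
Proof.
rewrite /proposal; case: pickP => [w /andP[/andP[wA uwR] /forallP best]|none].
  by constructor=> // w' w'A uw'R; move: (best w'); rewrite w'A uw'R.
constructor=> w wA; apply/negPn/negP => uwR.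
have [m /andP[mA umR] best] :=
  ex_best (P := fun x => (x \in A) && ((u, x) \notin R)) (ltM u) (introT andP (conj wA uwR)).
move: (none m); rewrite mA umR /= => /negbT/negP; apply.
by apply/forallP=> w'; apply/implyP=> /best.
Qed.

Lemma proposal_eq R R' u : (forall w, ((u, w) \in R) = ((u, w) \in R')) ->
  proposal R u = proposal R' u.
Proof.
move=> eqR; apply: eq_pick => w /=; rewrite eqR; congr (_ && _).
by apply: eq_forallb => w'; rewrite eqR.
Qed.

Definition proposals R : {set U * W} := [set p | proposal R p.1 == Some p.2].

(* One round of deferred acceptance: each woman rejects every proposer but her favourite. *)
Definition reject R : {set U * W} :=
  R :|: [set p | (proposal R p.1 == Some p.2) &&
                 [exists u', (proposal R u' == Some p.2) && prefW p.2 u' p.1]].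

Definition justified R :=
  forall u w, (u, w) \in R -> exists2 u', proposal R u' = Some w & prefW w u' u.

(* The favourite proposer of a woman is not rejected, so he keeps proposing to her. *)
Lemma justified_reject R : justified R -> justified (reject R).
Proof.
move=> justR u w uwR'.
have [u1 pu1 pu1u] : exists2 u1, proposal R u1 = Some w & prefW w u1 u.
  move: uwR'; rewrite in_setU => /orP[/justR //|].
  by rewrite inE /= => /andP[_ /existsP[u1 /andP[/eqP pu1 pu1u]]]; exists u1.
have [b /eqP pb bbest] := ex_best (P := fun x => proposal R x == Some w) (ltW w) (introT eqP pu1).
exists b; last exact: (nlt_lt_trans (ltW w) (bbest _ (introT eqP pu1)) pu1u).
rewrite -pb; apply: proposal_eq => w'; rewrite in_setU orb_idr // inE /=.
case/andP=> /eqP; rewrite pb => -[<-] /existsP[u' /andP[pu' pu'b]].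
by move: (bbest _ pu'); rewrite pu'b.
Qed.

Lemma proposals_stable R : justified R -> reject R = R -> stable A (proposals R).
Proof.
move=> justR fixR.
have accepted u u' w : proposal R u = Some w -> proposal R u' = Some w -> ~~ prefW w u' u.
  move=> pu pu'; apply/negP=> pu'u.
  have: (u, w) \in reject R.
    rewrite in_setU inE /= pu eqxx; apply/orP; right; apply/existsP; exists u'.
    by rewrite pu' eqxx.
  by rewrite fixR; move: pu; case: (proposalP R u) => // w0 _ uw0R _ [<-]; apply/negP.
split; first split.
- by move=> [u w] /[!inE] /= /eqP; case: (proposalP R u) => // w0 w0A _ _ [<-].
- move=> [u w] [u1 w'] /[!inE] /= /eqP pw /eqP pw' uu1; subst u1.
  by move: pw'; rewrite pw => -[->].
- move=> [u w] [u' w1] /[!inE] /= /eqP pu /eqP pu' ww1; subst w1.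
  by rewrite (nlt_anti (ltW w) (accepted _ _ _ pu' pu) (accepted _ _ _ pu pu')).
move=> u w [wA uwP ubetter wbetter].
have [uwR|uwR] := boolP ((u, w) \in R).
  have [u' pu' pu'u] := justR _ _ uwR.
  by have := wbetter u'; rewrite inE /= pu' eqxx => /(_ isT) /(lt_asym (ltW w)); rewrite pu'u.
have ubest x : proposal R u = Some x -> prefM u w x.
  by move=> pux; apply: ubetter; rewrite inE /= pux.
move: ubest; case: (proposalP R u) => [w0 _ _ best|none]; last by rewrite none in uwR.
by move=> /(_ w0 erefl); rewrite (negbTE (best w wA uwR)).
Qed.

Lemma stable_exists : exists M, stable A M.
Proof.
have just0 : justified set0 by move=> u w; rewrite inE.
have [R justR minR] := ex_argmin_nat (P := justified) (fun R => #|~: R|) just0.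
suff fixR : reject R = R by exists (proposals R); apply: proposals_stable.
apply: NNPP => neR; have: R \proper reject R.
  by rewrite properEneq eq_sym; apply/andP; split; [apply/eqP | apply: subsetUl].
by rewrite -properC => /proper_card; rewrite ltnNge (minR _ (justified_reject justR)).
Qed.

End DeferredAcceptance.

Definition outranked M : {set U * W} :=
  [set p | [exists y, ((p.1, y) \in M) && ~~ prefM p.1 p.2 y]].

Lemma outranked_prefer M N : men_prefer M N -> outranked N \subset outranked M.
Proof.
move=> prefMN; apply/subsetP=> -[u w] /[!inE] /existsP[y /andP[uyN nwy]] /=.
have [z uzM nyz] := prefMN _ _ uyN; apply/existsP; exists z.
by rewrite uzM (nlt_trans (ltM u) nwy nyz).
Qed.

(* A stable matching with the largest [outranked] set absorbs every join with a stable
   matching, hence is preferred by all men to every stable matching. *)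
Lemma men_optimal_exists A : exists M, men_optimal prefM prefW A M.
Proof.
have [M0 sM0] := stable_exists A.
have [M sM minM] := ex_argmin_nat (P := stable A) (fun M => #|~: outranked M|) sM0.
exists M; split=> // M' sM' u x uxM'; have [[mM _] [mM' _]] := (sM, sM').
have sJ : stable A (join M M') := join_stable (subxx A) sM sM'.
have eqJ : outranked (join M M') = outranked M.
  apply: setC_inj; apply/eqP; rewrite eqEcard setCS minM // andbT.
  exact: (outranked_prefer (join_prefer_l mM mM')).
have : (u, x) \in outranked M.
  rewrite -eqJ inE; have [y uyJ nxy] := join_prefer_r mM mM' uxM'.
  by apply/existsP; exists y; rewrite uyJ.
rewrite inE => /existsP[w /andP[uwM nxw]]; exists w => //.
by have [->|newx] := eqVneq w x; [left | right; apply: (nlt_lt (ltM u) _ nxw); rewrite eq_sym].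
Qed.

Lemma optimal_exists T Ws : exists Ms, optimal prefM prefW T Ws Ms.
Proof.
have [Ms0 stableMs0] := choice (fun t M => stable (Ws t) M) (fun t => stable_exists (Ws t)).
have [Ms feasMs minMs] :=
  ex_argmin_nat (P := feasible prefM prefW T Ws) (cost T) (fun t _ => stableMs0 t).
by exists Ms.
Qed.

Section JoinChain.
Variables (T : nat) (Ws : nat -> {set W}) (M1 : {set U * W}) (Ms : nat -> {set U * W}).
Hypothesis Ws_sub : forall t, 1 <= t < T -> Ws t \subset Ws t.+1.
Hypothesis optM1 : men_optimal prefM prefW (Ws 1) M1.
Hypothesis feasMs : feasible prefM prefW T Ws Ms.

(* [chain 0] is junk; the chain starts at [chain 1 = M1]. *)
Fixpoint chain t : {set U * W} :=
  if t is t'.+1 then if t' is 0 then M1 else join (chain t') (Ms t) else M1.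

Lemma chainS t : 0 < t -> chain t.+1 = join (chain t) (Ms t.+1).
Proof. by case: t. Qed.

Lemma chain_stable_prefer t : 1 <= t <= T -> stable (Ws t) (chain t) /\ men_prefer (chain t) (Ms t).
Proof.
elim: t => [//|t IH] /andP[_ tT]; have sMs : stable (Ws t.+1) (Ms t.+1) by apply: feasMs.
have [t0|t_gt0] := posnP t.
  subst t; have [sM1 bestM1] := optM1; split=> // u x /(bestM1 _ sMs)[w uwM1 wx]; exists w => //.
  by case: wx => [->|/(lt_asym (ltM u))]; rewrite ?ltxx.
have [sC _] : stable (Ws t) (chain t) /\ men_prefer (chain t) (Ms t).
  by apply: IH; rewrite t_gt0 ltnW.
have WsS : Ws t \subset Ws t.+1 by apply: Ws_sub; rewrite t_gt0.
rewrite chainS //; split; first exact: join_stable WsS sC sMs.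
exact: join_prefer_r sC.1 sMs.1.
Qed.

Lemma cost_chain : cost T chain <= cost T Ms.
Proof.
rewrite /cost big_nat_cond [X in _ <= X]big_nat_cond; apply: leq_sum => t /andP[/andP[t_gt0 tT] _].
have [sC prefC] : stable (Ws t) (chain t) /\ men_prefer (chain t) (Ms t).
  by apply: chain_stable_prefer; rewrite t_gt0 ltnW.
have sMt : stable (Ws t) (Ms t) by apply: feasMs; rewrite t_gt0 ltnW.
have sMt1 : stable (Ws t.+1) (Ms t.+1) by apply: feasMs.
by rewrite chainS //; apply: card_join_loss sC sMt sMt1.1 prefC.
Qed.

Lemma chain_optimal : (forall Ms', feasible prefM prefW T Ws Ms' -> cost T Ms <= cost T Ms') ->
  optimal prefM prefW T Ws chain.
Proof.
move=> minMs; split=> [t /chain_stable_prefer[]//|Ms' feasMs'].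
exact: leq_trans cost_chain (minMs _ feasMs').
Qed.

End JoinChain.

End StableMatchings.

Theorem corollary1 (U W : finType) (prefM : U -> rel W) (prefW : W -> rel U)
  (T : nat) (Ws : nat -> {set W}) :
  2 <= T ->
  (forall u, strict_total_order (prefM u)) ->
  (forall w, strict_total_order (prefW w)) ->
  (forall t, 1 <= t < T -> Ws t \subset Ws t.+1) ->
  Ws T = [set: W] ->
  exists Ms : nat -> {set U * W},
    optimal prefM prefW T Ws Ms /\ men_optimal prefM prefW (Ws 1) (Ms 1).
Proof.
move=> _ ltM ltW Ws_sub _.
have [Ms [feasMs minMs]] := optimal_exists ltM ltW T Ws.
have [M1 optM1] := men_optimal_exists ltM ltW (Ws 1).
exists (chain prefM M1 Ms); split=> //.
exact: chain_optimal Ws_sub optM1 feasMs minMs.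
Qed.
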